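(* Let $\Sigma$ be a finite alphabet. For any $L \subseteq \Sigma^*$ and $n \ge 0$, the language $L_n = \{w \in \Sigma^* : \mathrm{last}_n(w) \in L\}$ is $(2^{F_L(n)+1}-1)$-suffix testable.
   Context: Fix $a\in\Sigma$; $\mathrm{last}_n(a_1\cdots a_m)=a_{m-n+1}\cdots a_m$ if $n\le m$, else $a^{n-m}a_1\cdots a_m$. A fixed-size sliding window algorithm for $L$ is a sequence $(\mathcal{A}_n)_{n\ge0}$ of deterministic (possibly infinite-state) automata with injective encodings of their states into bit strings, $\mathcal{A}_n$ accepting $L_n$; its space complexity at $n$ is the maximal encoding length of a state of $\mathcal{A}_n$. $F_L(n)$ is the minimal space complexity at $n$ over all such algorithms. A language $K$ is $k$-suffix testable if for all $x,y\in\Sigma^*$ and $z\in\Sigma^k$: $xz\in K\iff yz\in K$. *)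

From Stdlib Require Import ClassicalEpsilon.
From mathcomp Require Import all_boot.
From mathcomp Require Import zify.

Set Implicit Arguments.
Unset Strict Implicit.
Unset Printing Implicit Defensive.

Section SlidingWindow.
Variable Sigma : finType.
Variable a : Sigma.

Definition last_n (n : nat) (w : seq Sigma) : seq Sigma :=
  if n <= size w then drop (size w - n) w else nseq (n - size w) a ++ w.

Definition Ln (L : seq Sigma -> Prop) (n : nat) : seq Sigma -> Prop :=
  fun w => L (last_n n w).

(* A deterministic (possibly infinite-state) automaton over Sigma, together
   with an injective encoding of its states into bit strings. *)
Record dfa := DFA {
  state : Type;
  init : state;
  delta : state -> Sigma -> state;
  final : state -> Prop;
  enc : state -> seq bool;
  enc_inj : injective enc }.

Definition run (A : dfa) (w : seq Sigma) : state A := foldl (@delta A) (@init A) w.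
Definition accepts (A : dfa) (w : seq Sigma) : Prop := final (run A w).

Definition sliding_window_algorithm (L : seq Sigma -> Prop) (A : nat -> dfa) : Prop :=
  forall n w, accepts (A n) w <-> Ln L n w.

Definition space_le (A : dfa) (k : nat) : Prop :=
  forall q : state A, size (enc q) <= k.

Definition F_bounded (L : seq Sigma -> Prop) (n k : nat) : Prop :=
  exists A : nat -> dfa, sliding_window_algorithm L A /\ space_le (A n) k.

Lemma last_n_rcons n w c :
  last_n n (rcons w c) = behead (rcons (last_n n w) c).
Proof.
rewrite /last_n size_rcons.
case: (leqP n (size w)) => Hn.
  rewrite (leq_trans Hn (leqnSn _)) subSn //.
  by rewrite -add1n -drop_drop drop1 drop_rcons // leq_subr.
case: (ltnP (size w).+1 n) => Hn2.
  have -> : n - size w = (n - (size w).+1).+1 by lia.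
  by rewrite /= rcons_cat.
have -> : n = (size w).+1 by lia.
by rewrite subnn drop0 subSn // subnn.
Qed.

Lemma size_last_n n w : size (last_n n w) = n.
Proof.
rewrite /last_n; case: leqP => H.
  by rewrite size_drop; lia.
by rewrite size_cat size_nseq; lia.
Qed.

Section Witness.
Variable L : seq Sigma -> Prop.
Variable m : nat.

Definition wstate := m.-tuple Sigma.

Lemma size_wdelta (t : wstate) c : size (behead (rcons t c)) == m.
Proof. by rewrite size_behead size_rcons size_tuple. Qed.

Definition wdelta (t : wstate) (c : Sigma) : wstate := Tuple (size_wdelta t c).

Lemma size_winit : size (nseq m a) == m.
Proof. by rewrite size_nseq. Qed.

Definition wenc (t : wstate) : seq bool := [seq x == t | x <- enum {: m.-tuple Sigma}].

Lemma wenc_inj : injective wenc.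
Proof.
move=> t u /eq_in_map H.
by apply/eqP; rewrite -(H t) ?eqxx // mem_enum.
Qed.

Definition wdfa : dfa :=
  @DFA wstate (Tuple size_winit) wdelta (fun t => L t) wenc wenc_inj.

Lemma wrun w : val (run wdfa w) = last_n m w.
Proof.
elim/last_ind: w => [|w c IH].
  rewrite /run /= /last_n /=.
  by case: m => [|k] //=; rewrite cats0.
by rewrite /run foldl_rcons /= -/(run wdfa w) IH last_n_rcons.
Qed.

Lemma wspace : space_le wdfa #|{: m.-tuple Sigma}|.
Proof. by move=> q; rewrite /= /wenc size_map -cardE. Qed.
End Witness.

Lemma F_bounded_ex L n : exists k, F_bounded L n k.
Proof.
exists #|{: n.-tuple Sigma}|; exists (fun m => wdfa L m); split.
  by move=> m w; rewrite /accepts /Ln /= -(wrun L).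
exact: wspace.
Qed.

Definition F_boundedb L n k : bool :=
  if excluded_middle_informative (F_bounded L n k) then true else false.

Lemma F_boundedb_ex L n : exists k, F_boundedb L n k.
Proof.
have [k Hk] := F_bounded_ex L n; exists k.
by rewrite /F_boundedb; case: excluded_middle_informative.
Qed.

Definition F_L (L : seq Sigma -> Prop) (n : nat) : nat := ex_minn (F_boundedb_ex L n).

Definition suffix_testable (K : seq Sigma -> Prop) (k : nat) : Prop :=
  forall x y z : seq Sigma, size z = k -> (K (x ++ z) <-> K (y ++ z)).

End SlidingWindow.

From mathcomp Require Import all_boot boolp zify.
From Stdlib Require Import ClassicalEpsilon.

Set Implicit Arguments.
Unset Strict Implicit.
Unset Printing Implicit Defensive.

(** Call u and v j-equivalent for a language K when K cannot tell uw from vw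
   for any extension w of length at least j.  These relations coarsen as j
   grows, 0-equivalence is the Myhill-Nerode congruence of K, and for
   K = L_n the n-equivalence is total.  Once two consecutive levels coincide,
   all higher levels coincide as well; so if K were not N-suffix testable,
   each of the N steps from level N down to level 0 would strictly refine
   the relation, and 0-equivalence would have at least N + 2 classes.  A sliding window
   algorithm whose states have encodings of length at most k has fewer than
   2^(k+1) states, and words reaching the same state are 0-equivalent. *)

(* The binary numeral 1s, least significant bit first: the leading 1 makes
   it injective on bit strings of all lengths. *)
Fixpoint nat_of_bits (s : seq bool) : nat :=
  if s is b :: s' then b + (nat_of_bits s').*2 else 1.

Lemma nat_of_bits_gt0 s : 0 < nat_of_bits s.
Proof. by elim: s => //= b s IH; case: b => /=; lia. Qed.

Lemma nat_of_bits_lt s : nat_of_bits s < 2 ^ (size s).+1.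
Proof. by elim: s => //= b s IH; rewrite expnS; case: b => /=; lia. Qed.

Lemma nat_of_bits_inj : injective nat_of_bits.
Proof.
elim=> [|b1 s1 IH] [|b2 s2] /=.
- by [].
- by have := nat_of_bits_gt0 s2; case: b2 => /=; lia.
- by have := nat_of_bits_gt0 s1; case: b1 => /=; lia.
move=> eq12; have eq_b : b1 = b2 by case: b1 b2 eq12 => [] [] /=; lia.
by subst b2; congr (_ :: _); apply: IH; case: b1 eq12 => /=; lia.
Qed.

Section Refinement.
Variables (T : Type) (e e' : rel T).
Hypotheses (e'_sym : symmetric e') (e'_trans : transitive e').

Lemma count_rel_le1 S u :
  pairwise (fun s t => ~~ e' s t) S -> count (e'^~ u) S <= 1.
Proof.
elim: S => //= s S IH /andP[sep_s /IH {}IH].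
case: (boolP (e' s u)) => [e'su|_]; last by rewrite add0n.
rewrite add1n ltnS leqNgt -has_count -all_predC.
apply: sub_all sep_s => t; apply: contraNN => e'tu.
by apply: e'_trans e'su _; rewrite e'_sym.
Qed.

(* Splitting one e'-class into two e-classes: keep the e'-separated words
   that are not e'-related to u, and add u and v. *)
Lemma pairwise_refine S u v :
  subrel e e' -> pairwise (fun s t => ~~ e' s t) S -> e' u v -> ~~ e u v ->
  exists2 S', pairwise (fun s t => ~~ e s t) S' & size S < size S'.
Proof.
move=> ee' sepS e'uv neuv; pose F := filter (predC (e'^~ u)) S.
have sep_u : all (fun s => ~~ e u s) F.
  rewrite all_filter; apply: sub_all (all_predT S) => s _ /=.
  by apply/implyP; apply: contraNN => /ee'; rewrite e'_sym.
have sep_v : all (fun s => ~~ e v s) F.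
  rewrite all_filter; apply: sub_all (all_predT S) => s _ /=.
  apply/implyP; apply: contraNN => /ee' e'vs.
  by rewrite e'_sym; apply: e'_trans e'uv e'vs.
exists [:: u, v & F].
  rewrite /= neuv sep_u sep_v; apply: pairwise_filter.
  by apply: sub_pairwise sepS => s t; apply: contraNN (ee' s t).
have := count_rel_le1 u sepS; have := count_predC (e'^~ u) S.
by rewrite /= size_filter; lia.
Qed.

End Refinement.

Section Nerode.
Variables (T : Type) (K : seq T -> Prop).

Definition nerode (j : nat) : rel (seq T) := fun u v =>
  `[< forall w, j <= size w -> (K (u ++ w) <-> K (v ++ w)) >].

Lemma nerode_sym j : symmetric (nerode j).
Proof.
suff imp : forall u v, nerode j u v -> nerode j v u.
  by move=> u v; apply/idP/idP; apply: imp.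
by move=> u v /asboolP uv; apply/asboolP => w jw; apply: iff_sym (uv w jw).
Qed.

Lemma nerode_trans j : transitive (nerode j).
Proof.
move=> v u t /asboolP uv /asboolP vt; apply/asboolP => w jw.
by rewrite (uv w jw); apply: vt.
Qed.

Lemma nerode_mono j j' : j <= j' -> subrel (nerode j) (nerode j').
Proof.
move=> jj' u v /asboolP uv; apply/asboolP => w j'w.
by apply: uv; apply: leq_trans j'w.
Qed.

Lemma nerodeS j u v :
  nerode j.+1 u v <-> forall c, nerode j (rcons u c) (rcons v c).
Proof.
split=> [/asboolP uv c | ucvc].
  by apply/asboolP => w jw; rewrite -!cats1 -!catA; apply: uv.
apply/asboolP => -[|c w] //= jw.
by move/asboolP: (ucvc c) => /(_ w jw); rewrite -!cats1 -!catA.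
Qed.

Lemma nerode_collapseS j :
  subrel (nerode j.+1) (nerode j) -> subrel (nerode j.+2) (nerode j.+1).
Proof. by move=> collapse u v /nerodeS uv; apply/nerodeS => c; apply/collapse. Qed.

Lemma nerode_collapse j :
  subrel (nerode j.+1) (nerode j) -> forall i, subrel (nerode (i + j)) (nerode j).
Proof.
move=> collapse i; suff step k : subrel (nerode (k + j).+1) (nerode (k + j)).
  by elim: i => // i IH u v /step; apply: IH.
by elim: k => // k IH; apply: nerode_collapseS.
Qed.

Variable n : nat.
Hypothesis nerode_total : forall u v, nerode n u v.

Lemma nerode_split j N x y :
  j < N -> ~~ nerode N x y -> exists u v, nerode j.+1 u v && ~~ nerode j u v.
Proof.
move=> jN /negP nxy; apply: contrapT => no_split; apply: nxy.
have collapse : subrel (nerode j.+1) (nerode j).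
  move=> u v uv; apply: contrapT => /negP nuv.
  by apply: no_split; exists u, v; rewrite uv.
apply: (nerode_mono (ltnW jN)); apply: (nerode_collapse (i := n) collapse).
exact: (nerode_mono (leq_addr j n)).
Qed.

Lemma nerode_chain N x y : ~~ nerode N x y -> forall d j, j + d = N ->
  exists2 S, pairwise (fun s t => ~~ nerode j s t) S & d + 2 <= size S.
Proof.
move=> nxy; elim=> [|d IH] j jdN.
  by rewrite addn0 in jdN; subst j; exists [:: x; y]; rewrite /= ?nxy.
have [S sepS szS] := IH j.+1 ltac:(lia).
have [u [v /andP[uv nuv]]] := nerode_split (j := j) (N := N) ltac:(lia) nxy.
have [S' sepS' szS'] :=
  pairwise_refine (@nerode_sym j.+1) (@nerode_trans j.+1)
    (nerode_mono (leqnSn j)) sepS uv nuv.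
by exists S' => //; lia.
Qed.

End Nerode.

Lemma suffix_testable_nerode (Sigma : finType) (K : seq Sigma -> Prop) j :
  (forall u v, nerode K j u v) -> suffix_testable K j.
Proof. by move=> total x y z jz; move/asboolP: (total x y); apply; rewrite jz. Qed.

(* The hypotheses on g say that the Myhill-Nerode congruence of K has at
   most m classes. *)
Lemma suffix_testable_of_index (Sigma : finType) (K : seq Sigma -> Prop) n m
    (g : seq Sigma -> nat) :
  (forall u v, nerode K n u v) -> (forall u, g u < m) ->
  (forall u v, g u = g v -> nerode K 0 u v) ->
  suffix_testable K (m - 1).
Proof.
move=> total g_lt g_nerode; apply: suffix_testable_nerode => x y.
apply: contrapT => /negP nxy.
have [S sepS szS] := nerode_chain total nxy (erefl (0 + (m - 1))).
have uniq_gS : uniq (map g S).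
  rewrite uniq_pairwise pairwise_map; apply: sub_pairwise sepS => s t.
  by apply: contraNN => /eqP /g_nerode.
have sub_gS : {subset map g S <= iota 0 m}.
  by move=> _ /mapP[s _ ->]; rewrite mem_iota g_lt.
by have := uniq_leq_size uniq_gS sub_gS; rewrite size_map size_iota; lia.
Qed.

Lemma last_n_cat (Sigma : finType) (a : Sigma) n u w :
  n <= size w -> last_n a n (u ++ w) = last_n a n w.
Proof.
move=> nw; rewrite /last_n size_cat nw (leq_trans nw (leq_addl _ _)).
by rewrite drop_cat -addnBA // ltnNge leq_addr addKn.
Qed.

Lemma nerode_Ln (Sigma : finType) (a : Sigma) L n u v : nerode (Ln a L n) n u v.
Proof. by apply/asboolP => w nw; rewrite /Ln !last_n_cat. Qed.

Lemma nerode_run (Sigma : finType) (K : seq Sigma -> Prop) (A : dfa Sigma) u v :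
  (forall w, accepts A w <-> K w) -> run A u = run A v -> nerode K 0 u v.
Proof.
move=> AK uv; apply/asboolP => w _.
by rewrite -!AK /accepts /run !foldl_cat -/(run A u) -/(run A v) uv.
Qed.

Lemma F_L_spec (Sigma : finType) (a : Sigma) L n : F_bounded a L n (F_L a L n).
Proof.
rewrite /F_L; case: ex_minnP => k + _.
by rewrite /F_boundedb; case: excluded_middle_informative.
Qed.

Theorem theorem6p3 (Sigma : finType) (a : Sigma) (L : seq Sigma -> Prop) (n : nat) :
  suffix_testable (Ln a L n) (2 ^ (F_L a L n).+1 - 1).
Proof.
have [A [swA spaceA]] := F_L_spec a L n.
pose g u := nat_of_bits (enc (run (A n) u)).
apply: (@suffix_testable_of_index _ _ n _ g).
- exact: nerode_Ln.
- move=> u; apply: leq_trans (nat_of_bits_lt _) _.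
  by rewrite leq_pexp2l // ltnS spaceA.
- by move=> u v /nat_of_bits_inj /enc_inj; apply: nerode_run (swA n).
Qed.
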